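(* Define the polynomial $\phi(\alpha_1,\alpha_2,\alpha_3,\beta_1,\beta_2,\beta_3)$ by $$\begin{aligned} \phi ={}& -(\alpha_2\beta_3+\alpha_3\beta_2)\alpha_1^8\alpha_2^2\alpha_3^2\beta_2^4\beta_3^4\\ &-(\alpha_2^4\beta_3^4-\alpha_2^3\alpha_3\beta_2\beta_3^3+\alpha_2^2\alpha_3^2\beta_2^2\beta_3^2-\alpha_2\alpha_3^3\beta_2^3\beta_3+\alpha_3^4\beta_2^4)(\alpha_2\beta_3+\alpha_3\beta_2)^2\alpha_1^7\beta_1\beta_2\beta_3\\ &-(\alpha_2\beta_3+\alpha_3\beta_2)(\alpha_2^4\beta_3^4+\alpha_2^2\alpha_3^2\beta_2^2\beta_3^2+\alpha_3^4\beta_2^4)\alpha_1^6\alpha_2\alpha_3\beta_1^2\beta_2\beta_3\\ &-2\alpha_1^5\alpha_2^4\alpha_3^4\beta_1^3\beta_2^3\beta_3^3\\ &-(\alpha_2\beta_3+\alpha_3\beta_2)(\alpha_2^4\beta_3^4-2\alpha_2^3\alpha_3\beta_2\beta_3^3+\alpha_2^2\alpha_3^2\beta_2^2\beta_3^2-2\alpha_2\alpha_3^3\beta_2^3\beta_3+\alpha_3^4\beta_2^4)\alpha_1^4\alpha_2^2\alpha_3^2\beta_1^4\\ &+2(\alpha_2^2\beta_3^2+\alpha_2\alpha_3\beta_2\beta_3+\alpha_3^2\beta_2^2)\alpha_1^3\alpha_2^4\alpha_3^4\beta_1^5\beta_2\beta_3\\ &+(\alpha_2\beta_3+\alpha_3\beta_2)(\alpha_2^2\beta_3^2+\alpha_3^2\beta_2^2)\alpha_1^2\alpha_2^4\alpha_3^4\beta_1^6\\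 &+(\alpha_2^2\beta_3^2+\alpha_3^2\beta_2^2)\alpha_1\alpha_2^5\alpha_3^5\beta_1^7. \end{aligned}$$ Let $p,q,r,u,v,w$ be arbitrary integers and let $$A=\begin{bmatrix} \phi(p,q,r,u,v,w) & \phi(q,r,p,v,w,u) & \phi(r,p,q,w,u,v)\\ p & q & r\\ u & v & w \end{bmatrix}.$$ Then $\det A = k$ and $\det(A^{(3)}) = k^3$, where $$\begin{aligned} k ={}& pqr(pv-qu)(pw-ru)(qw-rv)(p^2v^2+pquv+q^2u^2)\\ &\times(p^2w^2+pruw+r^2u^2)(q^2w^2+qrvw+r^2v^2)(pqw+prv+qru). \end{aligned}$$
   Context: For a matrix $M=(m_{ij})$, $M^{(3)}$ denotes the matrix $(m_{ij}^3)$ obtained by replacing each entry by its cube. *)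

From HB Require Import structures.
From mathcomp Require Import all_boot all_order all_algebra.
Set Implicit Arguments. Unset Strict Implicit. Unset Printing Implicit Defensive.
Import Order.TTheory GRing.Theory Num.Theory.
Local Open Scope ring_scope.

Definition phi (a1 a2 a3 b1 b2 b3 : int) : int :=
  - (a2*b3 + a3*b2) * a1^+8 * a2^+2 * a3^+2 * b2^+4 * b3^+4
  - (a2^+4*b3^+4 - a2^+3*a3*b2*b3^+3 + a2^+2*a3^+2*b2^+2*b3^+2
       - a2*a3^+3*b2^+3*b3 + a3^+4*b2^+4) * (a2*b3 + a3*b2)^+2 * a1^+7 * b1 * b2 * b3
  - (a2*b3 + a3*b2) * (a2^+4*b3^+4 + a2^+2*a3^+2*b2^+2*b3^+2 + a3^+4*b2^+4)
       * a1^+6 * a2 * a3 * b1^+2 * b2 * b3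
  - 2 * a1^+5 * a2^+4 * a3^+4 * b1^+3 * b2^+3 * b3^+3
  - (a2*b3 + a3*b2) * (a2^+4*b3^+4 - 2*a2^+3*a3*b2*b3^+3 + a2^+2*a3^+2*b2^+2*b3^+2
       - 2*a2*a3^+3*b2^+3*b3 + a3^+4*b2^+4) * a1^+4 * a2^+2 * a3^+2 * b1^+4
  + 2 * (a2^+2*b3^+2 + a2*a3*b2*b3 + a3^+2*b2^+2) * a1^+3 * a2^+4 * a3^+4 * b1^+5 * b2 * b3
  + (a2*b3 + a3*b2) * (a2^+2*b3^+2 + a3^+2*b2^+2) * a1^+2 * a2^+4 * a3^+4 * b1^+6
  + (a2^+2*b3^+2 + a3^+2*b2^+2) * a1 * a2^+5 * a3^+5 * b1^+7.

Definition matA (p q r u v w : int) : 'M[int]_3 :=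
  \matrix_(i < 3, j < 3)
    nth 0 (nth [::] [:: [:: phi p q r u v w; phi q r p v w u; phi r p q w u v];
        [:: p; q; r];
        [:: u; v; w]] i) j.

Definition cube_mx (n : nat) (M : 'M[int]_n) : 'M[int]_n := map_mx (fun x => x ^+ 3) M.

Definition kval (p q r u v w : int) : int :=
  p*q*r * (p*v - q*u) * (p*w - r*u) * (q*w - r*v)
  * (p^+2*v^+2 + p*q*u*v + q^+2*u^+2)
  * (p^+2*w^+2 + p*r*u*w + r^+2*u^+2)
  * (q^+2*w^+2 + q*r*v*w + r^+2*v^+2)
  * (p*q*w + p*r*v + q*r*u).

From HB Require Import structures.
From mathcomp Require Import all_boot all_order all_algebra ring.
Import GRing.Theory Num.Theory.
Local Open Scope ring_scope.

Lemma det_mx33 (R : comNzRingType) (M : 'M[R]_3) : \det M =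
  M 0 0 * (M 1 1 * M 2 2 - M 1 2 * M 2 1)
  - M 0 1 * (M 1 0 * M 2 2 - M 1 2 * M 2 0)
  + M 0 2 * (M 1 0 * M 2 1 - M 1 1 * M 2 0).
Proof.
(* Reading M through nat indices lets the lifted ordinals of the minors compute. *)
have [f Mf] : exists f : nat -> nat -> R, forall i j, M i j = f i j.
  by exists (fun i j => M (inord i) (inord j)) => i j; rewrite !inord_val.
rewrite (expand_det_row _ 0) !big_ord_recl big_ord0 /cofactor.
rewrite !(expand_det_row _ 0) !big_ord_recl !big_ord0 /cofactor !det_mx11.
by rewrite !mxE !Mf /=; ring.
Qed.

Lemma det_matA (p q r u v w : int) : \det (matA p q r u v w) = kval p q r u v w.
Proof. by rewrite det_mx33 !mxE /= /phi /kval; ring. Qed.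

Lemma det_cube_matA (p q r u v w : int) :
  \det (cube_mx (matA p q r u v w)) = kval p q r u v w ^+ 3.
Proof. by rewrite /cube_mx det_mx33 !mxE /= /phi /kval; ring. Qed.

Theorem theorem2 (p q r u v w : int) :
  \det (matA p q r u v w) = kval p q r u v w /\
  \det (cube_mx (matA p q r u v w)) = (kval p q r u v w) ^+ 3.
Proof. by split; [exact: det_matA | exact: det_cube_matA]. Qed.
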